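(* Let $d\ge2$ and suppose $\mathbf X\sim H$ is a $d$-dimensional random vector whose marginals are identical, continuous and strictly increasing, with correlation matrix $R$ and copula $C$. Then $H\sim\mathrm{IC}_R$ if and only if $C\sim\mathrm{IC}_R$.
   Context: $\mathcal L^2$ is the set of non-degenerate real random variables with finite variance. $(X,Y)\in\mathrm{IC}_r$ means $X,Y\in\mathcal L^2$ and $\mathrm{Corr}(X,Y)=\mathrm{Corr}(g(X),g(Y))=r$ for all measurable $g$ with $g(X),g(Y)\in\mathcal L^2$. For a correlation matrix $R=(r_{ij})_{d\times d}$, $\mathbf X\in\mathrm{IC}_R$ means $(X_i,X_j)\in\mathrm{IC}_{r_{ij}}$ for all $i,j\in[d]$. For a distribution function $G$ on $\mathbb R^d$ (in particular a copula), $G\sim\mathrm{IC}_R$ means that $\mathbf Y\in\mathrm{IC}_R$ for some random vector $\mathbf Y$ with distribution function $G$. *)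

From HB Require Import structures.
From mathcomp Require Import all_boot all_order all_algebra.
From mathcomp Require Import all_classical all_reals all_analysis.
Unset Printing Implicit Defensive.
Import Order.TTheory GRing.Theory Num.Theory numFieldTopology.Exports.
Local Open Scope classical_set_scope.
Local Open Scope ring_scope.

Section defs.
Context {R : realType}.

Definition L2 {d} {T : measurableType d} (P : probability T R) (X : T -> R) : Prop :=
  X \in Lfun P 2%:E /\ ~ (exists c : R, P [set w | X w = c] = 1%E).

Definition corr {d} {T : measurableType d} (P : probability T R) (X Y : T -> R) : R :=
  fine (covariance P X Y) / Num.sqrt (fine 'V_P[X] * fine 'V_P[Y]).

Definition IC_pair {d} {T : measurableType d} (P : probability T R)
    (X Y : T -> R) (r : R) : Prop :=
  [/\ L2 P X, L2 P Y, corr P X Y = r &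
    forall g : R -> R, measurable_fun setT g ->
      L2 P (g \o X) -> L2 P (g \o Y) -> corr P (g \o X) (g \o Y) = r].

Definition IC_vec {d} {T : measurableType d} (P : probability T R) {n : nat}
    (Rm : 'M[R]_n) (X : 'I_n -> {RV P >-> R}) : Prop :=
  forall i j : 'I_n, IC_pair P (X i) (X j) (Rm i j).

Definition is_df {d} {T : measurableType d} (P : probability T R) {n : nat}
    (X : 'I_n -> {RV P >-> R}) (G : ('I_n -> R) -> R) : Prop :=
  forall x : 'I_n -> R, P [set w | forall i, X i w <= x i] = (G x)%:E.

Definition dist_IC {n : nat} (Rm : 'M[R]_n) (G : ('I_n -> R) -> R) : Prop :=
  exists (d : measure_display) (T : measurableType d) (P : probability T R)
         (Y : 'I_n -> {RV P >-> R}), is_df P Y G /\ IC_vec P Rm Y.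

(* C is an n-dimensional copula: the distribution function (on R^n) of a
   random vector with standard uniform marginals. *)
Definition is_copula {n : nat} (C : ('I_n -> R) -> R) : Prop :=
  exists (d : measure_display) (T : measurableType d) (P : probability T R)
         (U : 'I_n -> {RV P >-> R}), is_df P U C /\
    forall (i : 'I_n) (t : R), 0 <= t <= 1 -> P [set w | U i w <= t] = t%:E.

End defs.

From HB Require Import structures.
From mathcomp Require Import all_boot all_order all_algebra.
From mathcomp Require Import all_classical all_reals all_analysis.
From mathcomp Require Import lra measurable_realfun.
Import Order.TTheory GRing.Theory Num.Theory numFieldTopology.Exports.
Local Open Scope classical_set_scope.
Local Open Scope ring_scope.

(* The common marginal F is a continuous increasing bijection of R onto (0,1)
   whose inverse, the quantile function, is measurable. Applied coordinatewise, F sends a vector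
   with distribution function H to one with distribution function C, and the
   quantile function sends a vector with distribution function C (whose
   coordinates lie in (0,1) almost surely) to one with distribution function
   H. Invariant correlation survives any such coordinatewise measurable map,
   because g o (F o Y) = (g o F) o Y. Square integrability is kept as F is
   bounded and injective, and the quantile transform has the marginals of X.
   For F o Y the event {F o Y <= u} is a box with some sides infinite, whose
   probability is a limit of values of H and so is the same for every vector
   with distribution function H. *)

Section measurable_boxes.
Context {R : realType} {d : measure_display} {T : measurableType d}.

Lemma measure_eq_ae (mu : {measure set T -> \bar R}) (A B : set T) :
  measurable A -> measurable B -> {ae mu, forall w, A w <-> B w} -> mu A = mu B.
Proof.
move=> mA mB [N [mN N0 ABN]].
have AB w : ~ N w -> (A w <-> B w) by move=> Nw; apply: contrapT => /ABN.
suff le_out (A' B' : set T) : measurable A' -> measurable B' ->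
    (forall w, ~ N w -> A' w -> B' w) -> (mu A' <= mu B')%E.
  by apply/le_anti/andP; split; apply: le_out => // w /AB [].
move=> mA' mB' A'B'; rewrite -(measureU0 mB' mN N0).
apply: le_measure; rewrite ?inE //; first exact: measurableU.
move=> w A'w; have [Nw|Nw] := pselect (N w); first by right.
by left; exact: A'B'.
Qed.

Lemma measurable_le_set (f : {mfun T >-> R}) c : measurable [set w | f w <= c].
Proof.
have -> : [set w | f w <= c] = f @^-1` `]-oo, c].
  by apply/seteqP; split => w /=; rewrite in_itv.
exact: measurable_funPTI.
Qed.

Lemma measurable_ge_set (f : {mfun T >-> R}) c : measurable [set w | c <= f w].
Proof.
have -> : [set w | c <= f w] = f @^-1` `[c, +oo[.
  by apply/seteqP; split => w /=; rewrite in_itv /= andbT.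
exact: measurable_funPTI.
Qed.

Lemma measurable_partial_box {n} (V : 'I_n -> {mfun T >-> R}) (J : pred 'I_n)
    (x : 'I_n -> R) :
  measurable [set w | forall k, J k -> V k w <= x k].
Proof.
have -> : [set w | forall k, J k -> V k w <= x k] =
    \bigcap_(k in [set k | J k]) [set w | V k w <= x k] by [].
apply: fin_bigcap_measurable; first exact: finite_finset.
by move=> k _; exact: measurable_le_set.
Qed.

Lemma measurable_box {n} (V : 'I_n -> {mfun T >-> R}) (x : 'I_n -> R) :
  measurable [set w | forall k, V k w <= x k].
Proof.
have -> : [set w | forall k, V k w <= x k] =
    \bigcap_(k in [set: 'I_n]) [set w | V k w <= x k].
  by apply/seteqP; split => w /= Vw k => [_|]; [exact: Vw | apply: Vw].
apply: fin_bigcap_measurable; first exact: finite_finset.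
by move=> k _; exact: measurable_le_set.
Qed.

End measurable_boxes.

Section partial_box.
Context {R : realType}.

Definition extend_box {n} (J : pred 'I_n) (x : 'I_n -> R) (m : nat) : 'I_n -> R :=
  fun k => if J k then x k else m%:R.

Lemma exists_nat_ubound {n} (f : 'I_n -> R) : exists m : nat, forall k, f k <= m%:R.
Proof.
exists (Num.truncn (\sum_k `|f k|)).+1 => k.
apply: le_trans (ler_norm (f k)) _; apply/ltW/(le_lt_trans _ (truncnS_gt _)).
by rewrite (bigD1 k) //= lerDl sumr_ge0.
Qed.

Lemma cvg_partial_box {d} {T : measurableType d} {Q : probability T R} {n}
    (V : 'I_n -> {RV Q >-> R}) (J : pred 'I_n) (x : 'I_n -> R) :
  (fun m => Q [set w | forall k, V k w <= extend_box J x m k]) @ \oo -->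
  Q [set w | forall k, J k -> V k w <= x k].
Proof.
pose A m := [set w | forall k, V k w <= extend_box J x m k].
have UA : \bigcup_m A m = [set w | forall k, J k -> V k w <= x k].
  apply/seteqP; split => w /=.
    by move=> [m _ Am] k Jk; have := Am k; rewrite /extend_box Jk.
  move=> Jx; have [m Vm] := exists_nat_ubound (fun k => V k w).
  by exists m => // k; rewrite /extend_box; case: ifP => Jk; [exact: Jx | exact: Vm].
rewrite -UA; apply: (nondecreasing_cvg_mu (mu := Q) (F := A)).
- by move=> m; exact: measurable_box.
- by rewrite UA; exact: measurable_partial_box.
- move=> m1 m2 m12; apply/subsetPset => w Am k; apply: le_trans (Am k) _.
  by rewrite /extend_box; case: ifP => // _; rewrite ler_nat.
Qed.

Section same_df.
Context {n : nat} (G : ('I_n -> R) -> R).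
Context {d1 d2 : measure_display} {T1 : measurableType d1} {T2 : measurableType d2}.
Context {Q1 : probability T1 R} {Q2 : probability T2 R}.
Context {V1 : 'I_n -> {RV Q1 >-> R}} {V2 : 'I_n -> {RV Q2 >-> R}}.
Hypotheses (dfV1 : is_df Q1 V1 G) (dfV2 : is_df Q2 V2 G).

Lemma df_partial_box_eq (J : pred 'I_n) (x : 'I_n -> R) :
  Q1 [set w | forall k, J k -> V1 k w <= x k] =
  Q2 [set w | forall k, J k -> V2 k w <= x k].
Proof.
have cvg1 := cvg_partial_box V1 J x.
rewrite (_ : (fun m => Q1 [set w | forall k, V1 k w <= extend_box J x m k]) =
  (fun m => Q2 [set w | forall k, V2 k w <= extend_box J x m k])) in cvg1; last first.
  by apply/funext => m; rewrite dfV1 dfV2.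
exact: cvg_unique _ cvg1 (cvg_partial_box V2 J x).
Qed.

Lemma df_marginal_eq i t : Q1 [set w | V1 i w <= t] = Q2 [set w | V2 i w <= t].
Proof.
have marginal d (T : measurableType d) (Q : probability T R) (V : 'I_n -> {RV Q >-> R}) :
    [set w | V i w <= t] = [set w | forall k, pred1 i k -> V k w <= (fun=> t) k].
  by apply/seteqP; split => w /= Vw => [k /eqP -> //|]; exact: Vw.
by rewrite !marginal; exact: df_partial_box_eq.
Qed.

End same_df.
End partial_box.

Section same_cdf.
Context {R : realType} {d1 d2 : measure_display}.
Context {T1 : measurableType d1} {T2 : measurableType d2}.
Context {Q1 : probability T1 R} {Q2 : probability T2 R}.
Context {V1 : {RV Q1 >-> R}} {V2 : {RV Q2 >-> R}}.
Hypothesis cdfV : forall x, Q1 [set w | V1 w <= x] = Q2 [set w | V2 w <= x].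

Lemma distribution_eq_cdf (A : set R) : measurable A ->
  distribution Q1 V1 A = distribution Q2 V2 A.
Proof.
have cdf_preimage d (T : measurableType d) (Q : probability T R)
    (V : {RV Q >-> R}) b : V @^-1` `]-oo, b] = [set w | V w <= b].
  by apply/seteqP; split => w /=; rewrite in_itv.
apply: (measure_unique (@ocitv R) (fun k => `]-(k%:R), k%:R]%classic)) => //.
- exact: ocitvI.
- by move=> k; exact: is_ocitv.
- apply/seteqP; split => // r _; exists (Num.truncn `|r|).+1 => //=; rewrite in_itv /=.
  have := truncnS_gt `|r|; have := ler_norm r; have := ler_norm (- r); rewrite normrN.
  by move=> *; apply/andP; split; lra.
- move=> _ /ocitvP [->|[[a b] /= ab ->]]; first by rewrite !measure0.
  have -> : `]a, b]%classic = `]-oo, b] `\` `]-oo, a].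
    by rewrite -[RHS]setCK setCD setCitvl setUC -[LHS]setCK setCitv.
  rewrite !measureD //= ?setIidr.
  all: try by rewrite /distribution /pushforward !cdf_preimage !cdfV.
  - by apply: subset_itvl; rewrite bnd_simp ltW.
all: by move=> *; apply: (le_lt_trans (probability_le1 _ _)) => //; exact: ltry.
Qed.

Lemma L2_eq_cdf : L2 Q1 V1 -> L2 Q2 V2.
Proof.
move=> [V1_L2 V1_nconst]; split; last first.
  move=> [c V2c]; apply: V1_nconst; exists c.
  by have := distribution_eq_cdf _ (measurable_set1 c); rewrite /distribution /pushforward V2c.
have m_sqr : measurable_fun [set: R] (fun y : R => (`|y| `^ 2)%:E).
  apply: measurableT_comp => //; apply: measurableT_comp (measurable_powR 2) _.
  exact: normr_measurable.
move: V1_L2; rewrite !inE /= => /andP[_ V1_fin]; apply/andP; split.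
  by rewrite inE /=; exact: measurable_funPT.
move: V1_fin; rewrite !inE /finite_norm unlock /=.
suff -> : (\int[Q2]_w (`|V2 w| `^ 2)%:E)%E = (\int[Q1]_w (`|V1 w| `^ 2)%:E)%E by [].
rewrite -(ge0_integral_distribution V2 m_sqr) => [|y]; last by rewrite lee_fin powR_ge0.
rewrite -(ge0_integral_distribution V1 m_sqr) => [|y]; last by rewrite lee_fin powR_ge0.
by apply: eq_measure_integral => A mA _; exact: (esym (distribution_eq_cdf A mA)).
Qed.

End same_cdf.

Section L2_IC_comp.
Context {R : realType} {d : measure_display} {T : measurableType d}.
Context (P : probability T R).

Lemma Lfun2_le1 (f : T -> R) : measurable_fun setT f ->
  (forall w, `|f w| <= 1) -> f \in Lfun P 2%:E.
Proof.
move=> mf f_le1; rewrite !inE /=; apply/andP; split; first by rewrite inE.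
rewrite inE /finite_norm unlock /=; apply: poweR_lty.
apply: (@le_lt_trans _ _ (\int[P]_w (cst 1%E) w)%E).
  apply: ge0_le_integral => //.
  - apply: measurableT_comp => //; apply: measurableT_comp (measurable_powR 2) _.
    exact: measurableT_comp (@normr_measurable R setT) mf.
  - by move=> w _; rewrite lee_fin powR_mulrn // exprn_ile1.
rewrite integral_cst // mul1e.
by apply: le_lt_trans (probability_le1 _ _) _ => //; exact: ltry.
Qed.

Lemma not_ae_cst_comp (Y : T -> R) (g : R -> R) : injective g ->
  ~ (exists c, P [set w | Y w = c] = 1%E) ->
  ~ (exists c, P [set w | g (Y w) = c] = 1%E).
Proof.
move=> g_inj Y_ncst [c gYc]; apply: Y_ncst.
have [w0 gYw0] : exists w0, g (Y w0) = c.
  apply: contrapT => gY_nc; move: gYc.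
  have -> : [set w | g (Y w) = c] = set0.
    by apply/seteqP; split => // w gYw; apply: gY_nc; exists w.
  by rewrite measure0 => /esym/eqP; rewrite onee_eq0.
exists (Y w0); rewrite -gYc; congr (P _); apply/seteqP; split => w /=.
  by move=> ->.
by move=> gYw; apply: g_inj; rewrite gYw gYw0.
Qed.

Lemma L2_comp_bounded_inj (Y : {RV P >-> R}) (g : R -> R) :
  measurable_fun setT g -> injective g -> (forall x, `|g x| <= 1) ->
  L2 P Y -> L2 P (g \o Y).
Proof.
move=> mg g_inj g_le1 [_ Y_ncst]; split; last exact: not_ae_cst_comp.
apply: Lfun2_le1 => //; first exact: (measurableT_comp mg (measurable_funPT Y)).
by move=> w; exact: g_le1.
Qed.

Definition comp_RV {g : R -> R} (mg : measurable_fun setT g) (X : {RV P >-> R}) :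
  {RV P >-> R} := mfun_Sub (mem_set (measurableT_comp mg (measurable_funPT X))).

Lemma comp_RVE {g : R -> R} (mg : measurable_fun setT g) (X : {RV P >-> R}) w :
  comp_RV mg X w = g (X w).
Proof. by []. Qed.

Lemma IC_pair_comp {X Y : T -> R} {r : R} {g : R -> R} :
  measurable_fun setT g -> L2 P (g \o X) -> L2 P (g \o Y) ->
  IC_pair P X Y r -> IC_pair P (g \o X) (g \o Y) r.
Proof.
move=> mg gX gY [_ _ _ IC_XY]; split => //; first exact: IC_XY.
by move=> h mh hgX hgY; exact: (IC_XY (h \o g) (measurableT_comp mh mg)).
Qed.

Lemma IC_vec_comp {n} (Rm : 'M[R]_n) (X : 'I_n -> {RV P >-> R}) (g : R -> R)
    (mg : measurable_fun setT g) :
  (forall i, L2 P (g \o X i)) -> IC_vec P Rm X ->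
  IC_vec P Rm (fun i => comp_RV mg (X i)).
Proof. by move=> gX IC_X i j; exact: IC_pair_comp mg (gX i) (gX j) (IC_X i j). Qed.

End L2_IC_comp.
Arguments comp_RV {R d T P g} mg X.

Lemma uniform_ae_in_01 {R : realType} {d} {T : measurableType d}
    (Q : probability T R) (V : {RV Q >-> R}) :
  (forall t, 0 <= t <= 1 -> Q [set w | V w <= t] = t%:E) ->
  {ae Q, forall w, 0 < V w < 1}.
Proof.
move=> V_unif.
have ge1 : Q [set w | 1 <= V w] = 0%E.
  apply/eqP; rewrite eq_le measure_ge0 andbT; apply/lee_addgt0Pr => e e0.
  rewrite add0e; have [e_ge1|e_lt1] := leP 1 e.
    by apply: le_trans (probability_le1 _ (measurable_ge_set _ _)) _; rewrite lee_fin.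
  have mVe := measurable_le_set V (1 - e).
  apply: (@le_trans _ _ (Q (~` [set w | V w <= 1 - e]))).
    apply: le_measure; rewrite ?inE; [exact: measurable_ge_set | exact: measurableC |].
    by move=> w /= V1 Ve; lra.
  rewrite probability_setC // V_unif; last by apply/andP; split; lra.
  by rewrite -EFinB lee_fin; lra.
have le0 : Q [set w | V w <= 0] = 0%E by rewrite V_unif // lexx ler01.
exists ([set w | V w <= 0] `|` [set w | 1 <= V w]); split.
- by apply: measurableU; [exact: measurable_le_set | exact: measurable_ge_set].
- by apply: null_set_setU => //; [exact: measurable_le_set | exact: measurable_ge_set].
- by move=> w /= /negP; rewrite negb_and -!leNgt => /orP[]; [left | right].
Qed.

Section quantile.
Context {R : realType} (F : R -> R).
Hypotheses (F_incr : {homo F : x y / x < y}) (F_in01 : forall x, 0 < F x < 1).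
Hypothesis F_onto : forall t, 0 < t < 1 -> exists x, F x = t.

Definition quantile (u : R) : R :=
  if 0 < u < 1 then xget 0 [set x | F x = u] else 0.

Lemma quantileK u : 0 < u < 1 -> F (quantile u) = u.
Proof. by move=> u01; rewrite /quantile u01; have := xgetPex 0 (F_onto _ u01); exact. Qed.

Lemma le_quantile u x : 0 < u < 1 -> (quantile u <= x) = (u <= F x).
Proof. by move=> u01; rewrite -(le_mono F_incr) quantileK. Qed.

Lemma ge_quantile u x : 0 < u < 1 -> (x <= quantile u) = (F x <= u).
Proof. by move=> u01; rewrite -(le_mono F_incr) quantileK. Qed.

Lemma measurable_quantile : measurable_fun setT quantile.
Proof.
apply: (measurability (@RGenCInfty.G R)); first exact: RGenCInfty.measurableE.
move=> _ [_ [x ->] <-]; rewrite setTI.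
have -> : quantile @^-1` `[x, +oo[ =
    (`]0, 1[ `&` `[F x, +oo[) `|` (if x <= 0 then ~` `]0, 1[ else set0).
  apply/seteqP; split => u /=; rewrite !in_itv /= !andbT.
    case u01: (0 < u < 1) => q_ge.
      by left; rewrite -(quantileK _ u01) (le_mono F_incr).
    by right; move: q_ge; rewrite /quantile u01 => ->; rewrite /= in_itv /= u01.
  move=> [[u01 Fx_le]|]; first by rewrite -(le_mono F_incr) quantileK.
  case: ifP => // x_le0 u_n01; rewrite /quantile ifF //.
  by apply/negP => u01; apply: u_n01; rewrite /= in_itv /= u01.
apply: measurableU; first by apply: measurableI; exact: measurable_itv.
by case: ifP => _ //; apply: measurableC; exact: measurable_itv.
Qed.

Lemma F_box_set0 {T : Type} {n} {Z : 'I_n -> T -> R} {u : 'I_n -> R} {i} :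
  u i <= 0 -> [set w | forall k, F (Z k w) <= u k] = set0.
Proof.
move=> ui_le0; apply/seteqP; split => w //= FZ_le.
have /andP[FZ_gt0 _] := F_in01 (Z i w).
by have := lt_le_trans FZ_gt0 (le_trans (FZ_le i) ui_le0); rewrite ltxx.
Qed.

Lemma F_box_quantile {T : Type} {n} {Z : 'I_n -> T -> R} {u : 'I_n -> R} :
  (forall i, 0 < u i) -> [set w | forall k, F (Z k w) <= u k] =
  [set w | forall k, u k < 1 -> Z k w <= quantile (u k)].
Proof.
move=> u_gt0; apply/seteqP; split => w /= FZ_le k.
  by move=> uk_lt1; rewrite ge_quantile ?u_gt0 ?uk_lt1 //; exact: FZ_le.
have [uk_lt1|uk_ge1] := ltP (u k) 1.
  by have := FZ_le k uk_lt1; rewrite ge_quantile // u_gt0 uk_lt1.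
by have /andP[_ FZ_lt1] := F_in01 (Z k w); exact: ltW (lt_le_trans FZ_lt1 uk_ge1).
Qed.

Lemma df_F_box_eq {n} {G : ('I_n -> R) -> R} {d1 d2 : measure_display}
    {T1 : measurableType d1} {T2 : measurableType d2}
    {Q1 : probability T1 R} {Q2 : probability T2 R}
    {V1 : 'I_n -> {RV Q1 >-> R}} {V2 : 'I_n -> {RV Q2 >-> R}} :
  is_df Q1 V1 G -> is_df Q2 V2 G -> forall u : 'I_n -> R,
  Q1 [set w | forall k, F (V1 k w) <= u k] = Q2 [set w | forall k, F (V2 k w) <= u k].
Proof.
move=> dfV1 dfV2 u; have [[i ui_le0]|u_gt0] := pselect (exists i, u i <= 0).
  by rewrite !(F_box_set0 ui_le0) !measure0.
have {}u_gt0 i : 0 < u i by rewrite ltNge; apply/negP => ?; apply: u_gt0; exists i.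
by rewrite !F_box_quantile //; exact: df_partial_box_eq.
Qed.

Section uniform_marginals.
Context {n : nat} {d : measure_display} {T : measurableType d} {Q : probability T R}.
Context (U : 'I_n -> {RV Q >-> R}).
Hypothesis U_unif : forall i t, 0 <= t <= 1 -> Q [set w | U i w <= t] = t%:E.

Let U_in01 : {ae Q, forall w i, 0 < U i w < 1}.
Proof. by apply: filter_forall => i; exact: uniform_ae_in_01 (U_unif i). Qed.

Lemma df_quantile_comp (C : ('I_n -> R) -> R) : is_df Q U C ->
  is_df Q (fun i => comp_RV measurable_quantile (U i)) (fun x => C (fun i => F (x i))).
Proof.
move=> dfU x; rewrite -dfU; apply: measure_eq_ae; [exact: measurable_box.. |].
apply: filterS U_in01 => w U01.
by split => le_x i; have := le_x i; rewrite comp_RVE le_quantile.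
Qed.

Lemma ae_F_quantile_comp : {ae Q, forall w i, F (quantile (U i w)) = U i w}.
Proof. by apply: filterS U_in01 => w U01 i; exact: quantileK. Qed.

End uniform_marginals.
End quantile.

Section cdf_range.
Context {R : realType} {d : measure_display} {T : measurableType d}.
Context {P : probability T R} (X : {RV P >-> R}) (F : R -> R).
Hypotheses (cdfX : forall x, P [set w | X w <= x] = (F x)%:E)
  (F_incr : {homo F : x y / x < y}).

Lemma cdf_in_01 x : 0 < F x < 1.
Proof.
have F_ge0 y : 0 <= F y by rewrite -lee_fin -cdfX measure_ge0.
have F_le1 y : F y <= 1.
  by rewrite -lee_fin -cdfX probability_le1 //; exact: measurable_le_set.
have lt_l : F (x - 1) < F x by apply: F_incr; rewrite ltrBlDr ltrDl.
have lt_r : F x < F (x + 1) by apply: F_incr; rewrite ltrDl.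
by rewrite (le_lt_trans (F_ge0 _) lt_l) (lt_le_trans lt_r (F_le1 _)).
Qed.

Lemma cdf_onto : continuous F -> forall t, 0 < t < 1 -> exists x, F x = t.
Proof.
move=> F_cont t /andP[t_gt0 t_lt1].
have cdfE : cdf X = EFin \o F.
  by apply/funext => x; rewrite /cdf /distribution /pushforward /= -cdfX.
have F_cvgy : F @ +oo --> (1 : R) by have := cvg_cdfy1 X; rewrite cdfE => /fine_cvg.
have F_cvgNy : F @ -oo --> (0 : R) by have := cvg_cdfNy0 X; rewrite cdfE => /fine_cvg.
have [M [_ FM]] := cvgr_gt _ F_cvgy _ t_lt1.
have [N [_ FN]] := cvgr_lt _ F_cvgNy _ t_gt0.
have t_lt : t < F (M + 1) by apply: FM; rewrite ltrDl.
have lt_t : F (N - 1) < t by apply: FN; rewrite ltrBlDr ltrDl.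
have NM : N - 1 <= M + 1.
  rewrite leNgt; apply/negP => /F_incr FMN.
  by have := lt_trans (lt_trans FMN lt_t) t_lt; rewrite ltxx.
have t_between :
    Num.min (F (N - 1)) (F (M + 1)) <= t <= Num.max (F (N - 1)) (F (M + 1)).
  by rewrite ge_min le_max (ltW lt_t) (ltW t_lt) orbT.
by have [c _ Fc] := IVT NM (continuous_subspaceT F_cont) t_between; exists c.
Qed.

End cdf_range.

Section copula_transfer.
Context {R : realType} {F : R -> R} (F_meas : measurable_fun setT F).
Hypotheses (F_incr : {homo F : x y / x < y}) (F_in01 : forall x, 0 < F x < 1).
Hypothesis F_onto : forall t, 0 < t < 1 -> exists x, F x = t.
Context {n : nat} {H C : ('I_n -> R) -> R}.
Hypothesis HE : forall x, H x = C (fun i => F (x i)).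
Context {d0 : measure_display} {T0 : measurableType d0} {Q0 : probability T0 R}.
Context {U0 : 'I_n -> {RV Q0 >-> R}}.
Hypotheses (dfU0 : is_df Q0 U0 C)
  (U0_unif : forall i t, 0 <= t <= 1 -> Q0 [set w | U0 i w <= t] = t%:E).

Let mq := measurable_quantile F F_incr F_onto.

Lemma dist_IC_copula_of_df (Rm : 'M[R]_n) : dist_IC Rm H -> dist_IC Rm C.
Proof.
move=> [d [T [Q [Y [dfY IC_Y]]]]].
have L2FY i : L2 Q (F \o Y i).
  have [L2Y _ _ _] := IC_Y i i.
  apply: L2_comp_bounded_inj L2Y => // [|x]; first exact/inc_inj/le_mono.
  by have /andP[F_gt0 F_lt1] := F_in01 x; rewrite ger0_norm ltW.
exists d, T, Q, (fun i => comp_RV F_meas (Y i)); split; last exact: IC_vec_comp.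
have df_qU0 : is_df Q0 (fun i => comp_RV mq (U0 i)) H.
  by move=> x; rewrite HE; exact: df_quantile_comp.
move=> u; rewrite -dfU0 (df_F_box_eq F F_incr F_in01 F_onto dfY df_qU0 u).
have mFqU0 : measurable [set w | forall k, F (comp_RV mq (U0 k) w) <= u k].
  exact: (measurable_box (fun k => comp_RV F_meas (comp_RV mq (U0 k))) u).
apply: measure_eq_ae mFqU0 (measurable_box _ _) _.
apply: filterS (ae_F_quantile_comp F F_onto U0 U0_unif) => w FqU.
by split => le_u k; have := le_u k; rewrite comp_RVE FqU.
Qed.

Lemma dist_IC_df_of_copula {dX : measure_display} {TX : measurableType dX}
    {P : probability TX R} (X : 'I_n -> {RV P >-> R}) (Rm : 'M[R]_n) :
  is_df P X H -> (forall i, L2 P (X i)) -> dist_IC Rm C -> dist_IC Rm H.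
Proof.
move=> dfX L2X [d [T [Q [U [dfU IC_U]]]]].
have U_unif i t : 0 <= t <= 1 -> Q [set w | U i w <= t] = t%:E.
  by move=> t01; rewrite (df_marginal_eq _ dfU dfU0) U0_unif.
have df_qU : is_df Q (fun i => comp_RV mq (U i)) H.
  by move=> x; rewrite HE; exact: df_quantile_comp.
exists d, T, Q, (fun i => comp_RV mq (U i)); split => //.
apply: IC_vec_comp => // i.
exact: (L2_eq_cdf (df_marginal_eq _ dfX df_qU i)) (L2X i).
Qed.

End copula_transfer.

Theorem corollary1 (R : realType) (n : nat) (hn : (2 <= n)%N)
  (dT : measure_display) (T : measurableType dT) (P : probability T R)
  (X : 'I_n -> {RV P >-> R}) (H C : ('I_n -> R) -> R) (F : R -> R)
  (Rm : 'M[R]_n) :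
  is_df P X H ->
  (forall (i : 'I_n) (x : R), P [set w | X i w <= x] = (F x)%:E) ->
  continuous F ->
  (forall x y : R, x < y -> F x < F y) ->
  (forall i : 'I_n, L2 P (X i)) ->
  (forall i j : 'I_n, Rm i j = corr P (X i) (X j)) ->
  is_copula C ->
  (forall x : 'I_n -> R, H x = C (fun i => F (x i))) ->
  (dist_IC Rm H <-> dist_IC Rm C).
Proof.
move=> dfX cdfX F_cont F_incr L2X _ [d0 [T0 [Q0 [U0 [dfU0 U0_unif]]]]] HE.
have n_gt0 : (0 < n)%N by apply: leq_trans hn.
pose i0 := Ordinal n_gt0.
have F_in01 := cdf_in_01 (X i0) F (cdfX i0) F_incr.
have F_onto := cdf_onto (X i0) F (cdfX i0) F_incr F_cont.
have F_meas := continuous_measurable_fun F_cont.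
split; first exact: (dist_IC_copula_of_df F_meas F_incr F_in01 F_onto HE dfU0 U0_unif Rm).
exact: (dist_IC_df_of_copula F_incr F_onto HE dfU0 U0_unif X Rm dfX L2X).
Qed.
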